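(* Let $t$ be a positive integer and let $G$ be a graph containing no copy of $\theta_{3,t}[2]$. Let $x,x',y,y'$ be distinct vertices of $G$ and let $R\subset N(y,y')\setminus\{x,x'\}$. Then the number of ordered pairs $(z,z')\in R^2$ of distinct vertices with $d(x,x',z,z')\ge 6t$ is at most $4t|R|$.
   Context: For vertices $v_1,\dots,v_k$ of a graph, $N(v_1,\dots,v_k)$ denotes their common neighbourhood and $d(v_1,\dots,v_k)=|N(v_1,\dots,v_k)|$. The theta graph $\theta_{3,t}$ is the union of $t$ paths of length $3$ sharing the same two endpoints and pairwise internally vertex-disjoint; $F[2]$ is obtained from a graph $F$ by replacing each vertex by an independent set of size $2$ and each edge by a copy of $K_{2,2}$ between the corresponding sets. *)

From mathcomp Require Import all_boot.
Set Implicit Arguments. Unset Strict Implicit. Unset Printing Implicit Defensive.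

Definition simple_graph (T : finType) (e : rel T) : Prop :=
  symmetric e /\ irreflexive e.

Definition common_nbhd (T : finType) (e : rel T) (vs : seq T) : {set T} :=
  [set w | all (fun v => e v w) vs].
Definition common_deg (T : finType) (e : rel T) (vs : seq T) : nat :=
  #|common_nbhd e vs|.

(* Vertices of theta_{3,t}: the two endpoints (inl false = a, inl true = b)
   and, for each path i < t, two internal vertices
   inr (i,false) (adjacent to a) and inr (i,true) (adjacent to b). *)
Definition theta_vert (t : nat) : finType := (bool + ('I_t * bool))%type.

Definition theta_adj0 (t : nat) (u v : theta_vert t) : bool :=
  match u, v with
  | inl false, inr (_, false) => true
  | inr (i, false), inr (j, true) => i == j
  | inr (_, true), inl true => true
  | _, _ => false
  end.

Definition theta_adj (t : nat) (u v : theta_vert t) : bool :=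
  theta_adj0 u v || theta_adj0 v u.

(* The blow-up F[2] for F = theta_{3,t}: each vertex w becomes (w,false),(w,true);
   each edge becomes a K_{2,2}. *)
Definition theta2_vert (t : nat) : finType := (theta_vert t * bool)%type.
Definition theta2_adj (t : nat) (p q : theta2_vert t) : bool :=
  theta_adj p.1 q.1.

Definition contains_theta2 (T : finType) (e : rel T) (t : nat) : Prop :=
  exists f : theta2_vert t -> T,
    injective f /\ forall p q, theta2_adj p q -> e (f p) (f q).

From mathcomp Require Import all_boot zify.

Set Implicit Arguments.
Unset Strict Implicit.
Unset Printing Implicit Defensive.

(* Take a maximal matching M among the ordered pairs in question.  If M has fewer
   than t pairs, its fewer than 2t vertices meet every pair, and each vertex lies
   in at most 2|R| of them.  Otherwise pick t disjoint pairs (z_i, z_i').  As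
   d(x, x', z_i, z_i') >= 6t, at least 6t - (2t + 2) >= 2t of these common
   neighbours avoid y, y' and all the z's, so distinct w_i, w_i' can be chosen
   greedily; then {x, x'}, {w_i, w_i'}, {z_i, z_i'}, {y, y'} span a
   theta_{3,t}[2]. *)

Section Matchings.

Variables (T : finType) (P : {set T * T}).

(* M is a matching when the 2|M| endpoints of its pairs are pairwise distinct,
   i.e. its pairs are loopless and vertex-disjoint. *)
Definition pair_end (pb : (T * T) * bool) : T := if pb.2 then pb.1.2 else pb.1.1.

Definition matched (M : {set T * T}) : {set T} := pair_end @: setX M setT.

Definition matching (M : {set T * T}) : bool :=
  (M \subset P) && dinjectiveb pair_end (setX M setT).

Lemma card_matched M : #|matched M| <= 2 * #|M|.
Proof.
by apply: leq_trans (leq_imset_card _ _) _; rewrite cardsX cardsT card_bool mulnC.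
Qed.

Lemma maximal_matching_covers M :
  {in P, forall p, p.1 != p.2} -> maxset matching M ->
  {in P, forall p, (p.1 \in matched M) || (p.2 \in matched M)}.
Proof.
move=> loopless /maxsetP [/andP [MP /dinjectiveP M_inj] M_max] p Pp.
apply: contraT; rewrite negb_or => /andP [p1M p2M].
have pM : p \notin M.
  by apply: contra p1M => Mp; apply/imsetP; exists (p, false); rewrite ?inE ?Mp.
suff /M_max/(_ (subsetUr _ _)) pMM : matching (p |: M) by rewrite -pMM setU11 in pM.
rewrite /matching subUset sub1set Pp MP; apply/dinjectiveP.
have pE b : pair_end (p, b) \notin matched M by case: b.
move=> [q b] [r c]; rewrite !in_setX !in_setT !in_setU1 !andbT.
case/orP=> [/eqP -> | Mq]; case/orP=> [/eqP -> | Mr] /= qr.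
- congr pair; move: qr (loopless p Pp); rewrite /pair_end.
  by case: b c => [] [] //= ->; rewrite eqxx.
- by case/negP: (pE b); rewrite qr imset_f // in_setX Mr in_setT.
- by case/negP: (pE c); rewrite -qr imset_f // in_setX Mq in_setT.
- by apply: M_inj; rewrite // in_setX in_setT andbT.
Qed.

Lemma matching_enum M k : matching M -> k <= #|M| ->
  exists2 z : 'I_k * bool -> T, injective z & forall i, (z (i, false), z (i, true)) \in P.
Proof.
move=> /andP [/subsetP MP /dinjectiveP M_inj] kM.
pose pair_of (i : 'I_k) := enum_val (widen_ord kM i).
have pair_ofM i : pair_of i \in M by apply: enum_valP.
exists (fun ib => pair_end (pair_of ib.1, ib.2)); last first.
  by move=> i; rewrite /pair_end /= -surjective_pairing MP.
move=> [i b] [j c] /M_inj; rewrite !in_setX !in_setT !pair_ofM => /(_ isT isT) [ij ->].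
by congr pair; apply/val_inj; move/enum_val_inj/(congr1 val): ij.
Qed.

Lemma matching_or_cover k : {in P, forall p, p.1 != p.2} ->
  (exists2 z : 'I_k * bool -> T, injective z & forall i, (z (i, false), z (i, true)) \in P)
  \/ (exists2 S : {set T}, #|S| < 2 * k & {in P, forall p, (p.1 \in S) || (p.2 \in S)}).
Proof.
move=> loopless.
have matching0 : matching set0.
  by rewrite /matching sub0set; apply/dinjectiveP => -[p b]; rewrite in_setX inE.
have [M M_max _] := maxset_exists matching0.
have [kM | Mk] := leqP k #|M|; first by left; apply: matching_enum (maxsetp M_max) kM.
right; exists (matched M); last exact: maximal_matching_covers.
by apply: leq_ltn_trans (card_matched M) _; rewrite ltn_mul2l.
Qed.

End Matchings.

Lemma exists_injective_choice (J T : finType) (A : J -> {set T}) :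
  (forall j, #|J| <= #|A j|) -> exists2 w : J -> T, injective w & forall j, w j \in A j.
Proof.
move=> A_large.
have [w0 w0A] : exists w0 : J -> T, forall j, w0 j \in A j.
  have A_ne j : exists a, a \in A j.
    by apply/card_gt0P; apply: leq_trans (A_large j); apply/card_gt0P; exists j.
  by exists (fun j => xchoose (A_ne j)) => j; apply: xchooseP.
suff greedy n (D : {set J}) : #|D| < n ->
    exists2 w : J -> T, (forall j, w j \in A j) & {in D &, injective w}.
  have [w wA w_inj] := greedy _ [set: J] (ltnSn _).
  by exists w => // i j; apply: w_inj; rewrite inE.
elim: n D => // n IH D.
have [-> _ | [j0 Dj0] Dn] := set_0Vmem D; first by exists w0 => [|i j]; rewrite ?inE.
have [w' w'A w'_inj] : exists2 w' : J -> T,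
    (forall j, w' j \in A j) & {in D :\ j0 &, injective w'}.
  by apply: IH; rewrite -ltnS (cardsD1 j0 D) Dj0 in Dn.
have [a] : exists a, a \in A j0 :\: w' @: (D :\ j0).
  apply/card_gt0P; rewrite cardsD subn_gt0.
  apply: leq_ltn_trans (subset_leq_card (subsetIr _ _)) _.
  apply: leq_ltn_trans (leq_imset_card _ _) _.
  apply: leq_trans (A_large j0); rewrite -cardsT.
  by apply/proper_card/(proper_sub_trans (properD1 Dj0))/subsetT.
rewrite inE => /andP [aD aA].
exists (fun j => if j == j0 then a else w' j) => [j | i j Di Dj].
  by case: eqP => // ->.
have w'D k : k \in D :\ j0 -> w' k != a.
  by move=> Dk; apply: contraNneq aD => <-; apply: imset_f.
case: (eqVneq i j0) => [-> | ij0]; case: (eqVneq j j0) => [-> | jj0] //.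
- by move=> aw; move: (w'D j); rewrite in_setD1 jj0 Dj -aw eqxx => /(_ isT).
- by move=> wa; move: (w'D i); rewrite in_setD1 ij0 Di wa eqxx => /(_ isT).
- by apply: w'_inj; rewrite in_setD1 ?ij0 ?jj0.
Qed.

Lemma exists_injective_choice_avoiding (J T : finType) (A : J -> {set T}) (F : {set T}) :
  (forall j, #|J| + #|F| <= #|A j|) ->
  exists2 w : J -> T, injective w & forall j, w j \in A j :\: F.
Proof.
move=> A_large; apply: exists_injective_choice => j.
rewrite cardsD -(addnK #|F| #|J|).
exact: leq_sub (A_large j) (subset_leq_card (subsetIr _ _)).
Qed.

Lemma card_covered_pairs (T : finType) (R S : {set T}) (P : {set T * T}) :
  P \subset setX R R -> {in P, forall p, (p.1 \in S) || (p.2 \in S)} ->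
  #|P| <= 2 * #|S| * #|R|.
Proof.
move=> /subsetP PRR S_cover.
have : P \subset setX S R :|: setX R S.
  apply/subsetP => -[a b] Pab; move: (PRR _ Pab) (S_cover _ Pab).
  by rewrite !inE /= => /andP [-> ->] /orP [] ->; rewrite ?orbT.
move/subset_leq_card/leq_trans; apply.
apply: leq_trans (leq_card_setU _ _) _.
by rewrite !cardsX mulnC -mulnA mulnC mul2n addnn.
Qed.

Lemma notin_common_nbhd (T : finType) (e : rel T) vs u :
  irreflexive e -> u \in common_nbhd e vs -> u \notin vs.
Proof.
by move=> e_irr; rewrite inE => /allP vs_u; apply/negP => /vs_u; rewrite e_irr.
Qed.

Section ThetaEmbedding.

Variables (T : finType) (e : rel T) (t : nat).
Hypotheses (e_sym : symmetric e) (e_irr : irreflexive e).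
Variables (x x' y y' : T) (z w : 'I_t * bool -> T).
Hypothesis ends_uniq : uniq [:: x; x'; y; y'].
Hypotheses (z_inj : injective z) (w_inj : injective w).
Hypothesis z_nbhd : forall j, z j \in common_nbhd e [:: y; y'] :\: [set x; x'].
Hypothesis w_nbhd : forall j, w j \in
  common_nbhd e [:: x; x'; z (j.1, false); z (j.1, true)] :\: ([set y; y'] :|: z @: setT).

Lemma z_adj j : e y (z j) && e y' (z j).
Proof. by move: (z_nbhd j); rewrite !inE /= andbT => /andP [_ ->]. Qed.

Lemma w_adj i b : [&& e x (w (i, b)), e x' (w (i, b)),
  e (z (i, false)) (w (i, b)) & e (z (i, true)) (w (i, b))].
Proof. by move: (w_nbhd (i, b)); rewrite !inE /= andbT => /andP [_ ->]. Qed.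

Lemma z_notin_ends j : z j \notin [:: x; x'; y; y'].
Proof.
move: (z_nbhd j); rewrite in_setD => /andP [zx /(notin_common_nbhd e_irr)].
by move: zx; rewrite !inE !negb_or => /andP [-> ->] /andP [-> ->].
Qed.

Lemma w_notin_ends j : w j \notin [:: x; x'; y; y'].
Proof.
move: (w_nbhd j); rewrite in_setD in_setU negb_or => /andP [/andP [wy _]].
move/(notin_common_nbhd e_irr); move: wy.
by rewrite !inE !negb_or => /andP [-> ->] /and4P [-> -> _ _].
Qed.

Lemma z_neq_w j k : z j != w k.
Proof.
move: (w_nbhd k); rewrite in_setD in_setU negb_or => /andP [/andP [_ wz] _].
by apply: contraNneq wz => <-; apply: imset_f.
Qed.

Definition end_vertex (a b : bool) : T := nth x [:: x; x'; y; y'] (a.*2 + b).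

Definition path_vertex (i : 'I_t) (c b : bool) : T := if c then z (i, b) else w (i, b).

Definition theta2_embedding (p : theta2_vert t) : T :=
  match p.1 with
  | inl a => end_vertex a p.2
  | inr (i, c) => path_vertex i c p.2
  end.

Lemma end_vertex_index_lt (a b : bool) : a.*2 + b < size [:: x; x'; y; y'].
Proof. by case: a b => [] []. Qed.

Lemma end_vertex_inj a b a' b' : end_vertex a b = end_vertex a' b' -> (a, b) = (a', b').
Proof.
by move/eqP; rewrite nth_uniq ?end_vertex_index_lt //; case: a b a' b' => [] [] [] [].
Qed.

Lemma path_vertex_inj i c b i' c' b' :
  path_vertex i c b = path_vertex i' c' b' -> (i, c, b) = (i', c', b').
Proof.
case: c c' => [] [] /=.
- by move/z_inj => [-> ->].
- by move/eqP; rewrite (negbTE (z_neq_w _ _)).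
- by move/esym/eqP; rewrite (negbTE (z_neq_w _ _)).
- by move/w_inj => [-> ->].
Qed.

Lemma end_vertex_neq_path_vertex a b i c b' : end_vertex a b != path_vertex i c b'.
Proof.
apply: contraNneq (_ : path_vertex i c b' \notin [:: x; x'; y; y']) => [<- |].
  exact/mem_nth/end_vertex_index_lt.
by case: c; [apply: z_notin_ends | apply: w_notin_ends].
Qed.

Lemma theta2_embedding_inj : injective theta2_embedding.
Proof.
move=> [[a | [i c]] b] [[a' | [i' c']] b']; rewrite /theta2_embedding /=.
- by move/end_vertex_inj => [-> ->].
- by move/eqP; rewrite (negbTE (end_vertex_neq_path_vertex _ _ _ _ _)).
- by move/esym/eqP; rewrite (negbTE (end_vertex_neq_path_vertex _ _ _ _ _)).
- by move/path_vertex_inj => [-> -> ->].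
Qed.

Lemma theta2_embedding_adj p q :
  theta2_adj p q -> e (theta2_embedding p) (theta2_embedding q).
Proof.
have adj0 u v b c : theta_adj0 u v ->
    e (theta2_embedding (u, b)) (theta2_embedding (v, c)).
  case: u v => [[] | [i []]] [[] | [j []]] //= => [_ | _ | /eqP <-].
  - by case/and4P: (w_adj j c); case: b.
  - by rewrite e_sym; case/andP: (z_adj (i, b)); case: c.
  - by rewrite e_sym; case/and4P: (w_adj i b); case: c.
case: p q => [u b] [v c]; rewrite /theta2_adj /theta_adj /=.
by case/orP => [/(adj0 _ _ b c) | /(adj0 _ _ c b)]; rewrite // e_sym.
Qed.

Lemma contains_theta2_of_paths : contains_theta2 e t.
Proof.
exists theta2_embedding; split; [exact: theta2_embedding_inj | exact: theta2_embedding_adj].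
Qed.

End ThetaEmbedding.

Theorem lemma2p2 (T : finType) (e : rel T) (t : nat)
  (Hg : simple_graph e) (Ht : 0 < t)
  (Hfree : ~ contains_theta2 e t)
  (x x' y y' : T) (Hdist : uniq [:: x; x'; y; y'])
  (R : {set T}) (HR : R \subset common_nbhd e [:: y; y'] :\: [set x; x']) :
  #|[set p : T * T | [&& p.1 \in R, p.2 \in R, p.1 != p.2 &
                        6 * t <= common_deg e [:: x; x'; p.1; p.2]]]|
    <= 4 * t * #|R|.
Proof.
case: Hg => e_sym e_irr.
set P := [set p : T * T | _].
have PRR : P \subset setX R R by apply/subsetP => p; rewrite !inE => /and4P [-> -> _ _].
have P_loopless : {in P, forall p, p.1 != p.2} by move=> p; rewrite inE => /and4P [].
have [[z z_inj zP] | [S S_small S_cover]] := matching_or_cover t P_loopless; last first.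
  by apply: leq_trans (card_covered_pairs PRR S_cover) _; apply: leq_mul => //; lia.
have z_nbhd j : z j \in common_nbhd e [:: y; y'] :\: [set x; x'].
  by apply: (subsetP HR); case: j => i [] /=; move: (zP i); rewrite inE => /and4P [].
pose N (j : 'I_t * bool) := common_nbhd e [:: x; x'; z (j.1, false); z (j.1, true)].
pose F := [set y; y'] :|: z @: setT.
have [[i b] | w w_inj w_nbhd] := @exists_injective_choice_avoiding _ _ N F.
  have F_small : #|F| <= 2 + 2 * t.
    apply: leq_trans (leq_card_setU _ _) (leq_add _ _); first by rewrite cards2 ltnS leq_b1.
    apply: leq_trans (leq_imset_card _ _) _.
    by rewrite cardsT card_prod card_ord card_bool mulnC.
  move: (zP i); rewrite inE => /and4P [_ _ _]; apply: leq_trans.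
  rewrite card_prod card_ord card_bool; apply: leq_trans (leq_add (leqnn _) F_small) _; lia.
by case: Hfree; apply: (contains_theta2_of_paths e_sym e_irr Hdist z_inj w_inj).
Qed.
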